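(* Every real CPS tensor $\mathcal{A}\in\mathbb{R}^{n\times n\times n\times n}$ admits a decomposition \[ \mathcal{A}=\sum_{i=1}^r\lambda_i\, a_i\otimes a_i\otimes b_i\otimes b_i, \] with $\lambda_i\in\mathbb{R}$ and $a_i,b_i\in\mathbb{R}^n$ for $i=1,\dots,r$.
   Context: A real tensor $\mathcal{A}\in\mathbb{R}^{n\times n\times n\times n}$ is (real) conjugate partial-symmetric (CPS) if $\mathcal{A}_{ijkl}=\mathcal{A}_{klij}=\mathcal{A}_{jikl}=\mathcal{A}_{ijlk}$ for all indices. $(u\otimes v\otimes w\otimes z)_{ijkl}=u_iv_jw_kz_l$. *)

From mathcomp Require Import all_boot all_algebra.
Set Implicit Arguments. Unset Strict Implicit. Unset Printing Implicit Defensive.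
Import GRing.Theory Num.Theory.
Local Open Scope ring_scope.

Definition tensor4 (R : Type) (n : nat) := 'I_n -> 'I_n -> 'I_n -> 'I_n -> R.

Definition is_CPS (R : Type) (n : nat) (A : tensor4 R n) : Prop :=
  forall i j k l : 'I_n,
    A i j k l = A k l i j /\ A i j k l = A j i k l /\ A i j k l = A i j l k.

Definition outer4 (R : nzRingType) (n : nat) (u v w z : 'rV[R]_n) : tensor4 R n :=
  fun i j k l => u 0 i * v 0 j * w 0 k * z 0 l.

From mathcomp Require Import all_boot all_algebra.
From mathcomp Require Import ring.
Import GRing.Theory Num.Theory.
Set Implicit Arguments. Unset Strict Implicit. Unset Printing Implicit Defensive.
Local Open Scope ring_scope.

(* They give
   4 A = sum_ijkl A_ijkl (e_i e_j + e_j e_i) (x) (e_k e_l + e_l e_k), and each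
   symmetrized product polarizes:
   4 (u v + v u) (x) (w z + z w)
     = sum_(s, t = +-1) s t (u + s v)^(x)2 (x) (w + t z)^(x)2. *)

Section Decomposable.
Variables (R : nzRingType) (n : nat).

Definition cps_decomposable (T : tensor4 R n) : Prop :=
  exists (r : nat) (lambda : 'I_r -> R) (a b : 'I_r -> 'rV[R]_n),
    forall i j k l : 'I_n,
      T i j k l = \sum_(s < r) lambda s * outer4 (a s) (a s) (b s) (b s) i j k l.

Lemma cps_decomposable_ext (T U : tensor4 R n) :
  cps_decomposable T -> (forall i j k l, U i j k l = T i j k l) ->
  cps_decomposable U.
Proof.
by move=> [r [lambda [a [b eqT]]]] eqUT; exists r, lambda, a, b => i j k l;
  rewrite eqUT eqT.
Qed.

Lemma cps_decomposable0 : cps_decomposable (fun _ _ _ _ => 0).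
Proof.
by exists 0, (fun=> 0), (fun=> 0), (fun=> 0) => i j k l; rewrite big_ord0.
Qed.

Lemma cps_decomposable_rank1 (c : R) (a b : 'rV[R]_n) :
  cps_decomposable (fun i j k l => c * outer4 a a b b i j k l).
Proof.
by exists 1, (fun=> c), (fun=> a), (fun=> b) => i j k l; rewrite big_ord1.
Qed.

Lemma cps_decomposableZ (c : R) (T : tensor4 R n) :
  cps_decomposable T -> cps_decomposable (fun i j k l => c * T i j k l).
Proof.
move=> [r [lambda [a [b eqT]]]]; exists r, (fun s => c * lambda s), a, b.
by move=> i j k l; rewrite eqT mulr_sumr; apply: eq_bigr => s _; rewrite mulrA.
Qed.

Lemma cps_decomposableD (T U : tensor4 R n) :
  cps_decomposable T -> cps_decomposable U ->
  cps_decomposable (fun i j k l => T i j k l + U i j k l).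
Proof.
move=> [r1 [lambda1 [a1 [b1 eqT]]]] [r2 [lambda2 [a2 [b2 eqU]]]].
pose glue (X : Type) (f1 : 'I_r1 -> X) (f2 : 'I_r2 -> X) (s : 'I_(r1 + r2)) :=
  match split s with inl s1 => f1 s1 | inr s2 => f2 s2 end.
exists (r1 + r2), (glue _ lambda1 lambda2), (glue _ a1 a2), (glue _ b1 b2).
move=> i j k l; rewrite eqT eqU big_split_ord /glue.
by congr (_ + _); apply: eq_bigr => s _; rewrite (unsplitK (inl _)) ||
  rewrite (unsplitK (inr _)).
Qed.

Lemma cps_decomposable_sum (I : finType) (T : I -> tensor4 R n) :
  (forall x, cps_decomposable (T x)) ->
  cps_decomposable (fun i j k l => \sum_x T x i j k l).
Proof.
move=> decT; elim: (index_enum I) => [|x xs IHxs].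
  by apply: cps_decomposable_ext cps_decomposable0 _ => i j k l; rewrite big_nil.
apply: cps_decomposable_ext (cps_decomposableD (decT x) IHxs) _ => i j k l.
by rewrite big_cons.
Qed.

End Decomposable.

Definition outer4_psym (R : nzRingType) (n : nat) (u v w z : 'rV[R]_n) :
    tensor4 R n :=
  fun i j k l => (u 0 i * v 0 j + v 0 i * u 0 j) * (w 0 k * z 0 l + z 0 k * w 0 l).

Section Expansion.
Variables (R : comNzRingType) (n : nat).

Lemma sum_mul_delta (G : 'I_n -> R) (p : 'I_n) : \sum_i G i * (p == i)%:R = G p.
Proof.
rewrite (bigD1 p) //= eqxx mulr1 big1 ?addr0 // => i.
by rewrite eq_sym => /negbTE->; rewrite mulr0.
Qed.

Lemma sum_mul_psym_delta (B : 'I_n -> 'I_n -> R) (p q : 'I_n) :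
  \sum_i \sum_j B i j * ((p == i)%:R * (q == j)%:R + (p == j)%:R * (q == i)%:R)
  = B p q + B q p.
Proof.
transitivity (\sum_i (\sum_j B i j * (q == j)%:R) * (p == i)%:R
              + \sum_i (\sum_j B i j * (p == j)%:R) * (q == i)%:R).
  rewrite -big_split; apply: eq_bigr => i _; rewrite !big_distrl -big_split.
  by apply: eq_bigr => j _ /=; ring.
by rewrite !sum_mul_delta.
Qed.

Lemma psym_expansion (A : tensor4 R n) :
  (forall i j k l, A i j k l = A j i k l) ->
  (forall i j k l, A i j k l = A i j l k) ->
  forall p q r s, A p q r s *+ 4 = \sum_i \sum_j \sum_k \sum_l
    A i j k l * outer4_psym 'e_i 'e_j 'e_k 'e_l p q r s.
Proof.
move=> symA12 symA34 p q r s.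
pose psym_delta (p q i j : 'I_n) : R :=
  (p == i)%:R * (q == j)%:R + (p == j)%:R * (q == i)%:R.
transitivity (\sum_i \sum_j
  (\sum_k \sum_l A i j k l * psym_delta r s k l) * psym_delta p q i j).
  rewrite !sum_mul_psym_delta (symA34 p q s r) (symA12 q p r s) (symA12 q p s r).
  by rewrite (symA34 p q s r); ring.
apply: eq_bigr => i _; apply: eq_bigr => j _; rewrite !big_distrl.
apply: eq_bigr => k _; rewrite big_distrl; apply: eq_bigr => l _.
by rewrite /outer4_psym /psym_delta !mxE !eqxx /=; ring.
Qed.

End Expansion.

Section Polarization.
Variables (F : fieldType) (n : nat).
Hypothesis two_neq0 : 2 != 0 :> F.

Let four_neq0 : 4 != 0 :> F.
Proof. by rewrite -[4]/(2 * 2)%:R natrM mulf_neq0. Qed.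

Lemma cps_decomposable_psym (u v w z : 'rV[F]_n) :
  cps_decomposable (outer4_psym u v w z).
Proof.
pose quarter (c : F) (x y : 'rV[F]_n) i j k l := c / 4 * outer4 x x y y i j k l.
have dec : cps_decomposable (fun i j k l =>
  quarter 1 (u + v) (w + z) i j k l + quarter (-1) (u - v) (w + z) i j k l +
  (quarter (-1) (u + v) (w - z) i j k l + quarter 1 (u - v) (w - z) i j k l)).
  by do 2!apply: cps_decomposableD; apply: cps_decomposable_rank1.
apply: cps_decomposable_ext dec _.
move=> i j k l; rewrite /quarter /outer4 /outer4_psym !mxE.
by field; rewrite four_neq0.
Qed.

Lemma cps_decomposable_partial_sym (A : tensor4 F n) :
  (forall i j k l, A i j k l = A j i k l) ->
  (forall i j k l, A i j k l = A i j l k) ->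
  cps_decomposable A.
Proof.
move=> symA12 symA34.
have dec : cps_decomposable (fun p q r s => \sum_i \sum_j \sum_k \sum_l
    A i j k l * outer4_psym 'e_i 'e_j 'e_k 'e_l p q r s).
  do 4!apply: cps_decomposable_sum => ?.
  by apply: cps_decomposableZ; apply: cps_decomposable_psym.
apply: cps_decomposable_ext (cps_decomposableZ (4 : F)^-1 dec) _ => p q r s.
by rewrite -psym_expansion // -[A p q r s *+ 4]mulr_natl mulKf.
Qed.

End Polarization.

Theorem theorem3p4 (R : realFieldType) (n : nat) (A : tensor4 R n) :
  is_CPS A ->
  exists (r : nat) (lambda : 'I_r -> R) (a b : 'I_r -> 'rV[R]_n),
    forall i j k l : 'I_n,
      A i j k l = \sum_(s < r) lambda s * outer4 (a s) (a s) (b s) (b s) i j k l.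
Proof.
move=> cpsA; apply: cps_decomposable_partial_sym.
- by rewrite pnatr_eq0.
- by move=> i j k l; have [_ [sym12 _]] := cpsA i j k l.
- by move=> i j k l; have [_ [_ sym34]] := cpsA i j k l.
Qed.
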